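(* Let $\lambda>0$, $\gamma>0$, $\beta\ge 0$. Let $X$ be the Banach space of bounded analytic functions $h:[0,\lambda]\to\mathbb{R}$ with the supremum norm, $K=\{h\in X: h\ge 0,\ \|h\|_\infty\le 1\}$, and for $h\in K$ let $\Psi_h=1+\beta h$, $$D_h=\gamma\left(1+\gamma\int_0^\lambda\frac{\exp\left(-2\int_0^x\frac{\xi}{\Psi_h(\xi)}d\xi\right)}{\Psi_h(x)}\,dx\right)^{-1},$$ and define the operator $\tau:K\to X$ by $$(\tau h)(\eta)=D_h\left(\frac1\gamma+\int_0^\eta\frac{\exp\left(-2\int_0^x\frac{\xi}{\Psi_h(\xi)}d\xi\right)}{\Psi_h(x)}\,dx\right),\quad 0<\eta<\lambda.$$ Let $y\in K$. Then $y$ is a solution of \begin{align*} &[(1+\beta y(\eta))y'(\eta)]'+2\eta y'(\eta)=0, \quad 0<\eta<\lambda,\\ &y'(0)+\beta y(0)y'(0)-\gamma y(0)=0,\\ &y(\lambda)=1, \end{align*} if and only if $y$ is a fixed point of $\tau$. *)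

From Stdlib Require Import Reals.
From Coquelicot Require Import Coquelicot.
Open Scope R_scope.

Definition analytic_on_closed (lam : R) (h : R -> R) : Prop :=
  forall x0, 0 <= x0 <= lam ->
    exists (a : nat -> R) (r : R), 0 < r /\
      forall x, Rabs (x - x0) < r -> is_pseries a (x - x0) (h x).

Definition in_X (lam : R) (h : R -> R) : Prop :=
  analytic_on_closed lam h /\
  exists M, forall x, 0 <= x <= lam -> Rabs (h x) <= M.

Definition in_K (lam : R) (h : R -> R) : Prop :=
  in_X lam h /\ forall x, 0 <= x <= lam -> 0 <= h x <= 1.

Definition Psi (beta : R) (h : R -> R) (x : R) : R := 1 + beta * h x.

Definition integrand (beta : R) (h : R -> R) (x : R) : R :=
  exp (-2 * RInt (fun xi => xi / Psi beta h xi) 0 x) / Psi beta h x.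

Definition D_h (lam gamma beta : R) (h : R -> R) : R :=
  gamma / (1 + gamma * RInt (integrand beta h) 0 lam).

Definition tau (lam gamma beta : R) (h : R -> R) (eta : R) : R :=
  D_h lam gamma beta h * (1 / gamma + RInt (integrand beta h) 0 eta).

Definition is_solution (lam gamma beta : R) (y : R -> R) : Prop :=
  (forall eta, 0 < eta < lam ->
     ex_derive y eta /\
     ex_derive (fun x => (1 + beta * y x) * Derive y x) eta /\
     Derive (fun x => (1 + beta * y x) * Derive y x) eta
       + 2 * eta * Derive y eta = 0) /\
  (ex_derive y 0 /\
   Derive y 0 + beta * y 0 * Derive y 0 - gamma * y 0 = 0) /\
  y lam = 1.

(* y is a fixed point of tau (equality as elements of X, i.e. on [0, lam]). *)
Definition is_fixed_point (lam gamma beta : R) (y : R -> R) : Prop :=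
  forall eta, 0 <= eta <= lam -> y eta = tau lam gamma beta y eta.

From Stdlib Require Import Reals Lra.
From Coquelicot Require Import Coquelicot.
Open Scope R_scope.

(* With Psi = 1 + beta y, the equation says that the flux Psi y' has logarithmic
   derivative -2 eta / Psi, so exp (2 G) Psi y' is constant, G being the primitive of
   xi / Psi vanishing at 0.  Hence the solutions of the equation on (0, lam) are exactly
   the functions A + B F, with F the primitive of the integrand of tau vanishing at 0.
   The Robin condition at 0 forces B = gamma A and y lam = 1 forces
   A (1 + gamma F lam) = 1, i.e. A = D_h / gamma and B = D_h: this is y = tau y.
   Analyticity on the closed interval only serves to make y differentiable, and Psi
   positive, on an open interval around [0, lam], so that F and G are differentiable
   up to the endpoints. *)

Lemma CV_radius_gt_of_ex_pseries (a : nat -> R) (r : R) :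
  (forall z, Rabs z < r -> ex_pseries a z) ->
  forall z, Rabs z < r -> Rbar_lt (Rabs z) (CV_radius a).
Proof.
  intros Hcv z Hz.
  assert (Hr0 := CV_radius_ge_0 a).
  destruct (CV_radius a) as [c| |] eqn:Ec; simpl in *; try easy.
  destruct (Rlt_le_dec (Rabs z) c) as [Hlt|Hle]; [exact Hlt|exfalso].
  (* a point strictly between the radius and [r] where the series still converges *)
  set (w := (c + r) / 2).
  assert (Hw : Rabs w = w) by (apply Rabs_pos_eq; unfold w; lra).
  apply (CV_disk_outside a w).
  - rewrite Ec, Hw; simpl; unfold w; lra.
  - apply ex_series_lim_0.
    destruct (Hcv w ltac:(rewrite Hw; unfold w; lra)) as [l Hl].
    exists l; eapply is_series_ext; [|exact Hl].
    intros n; rewrite pow_n_pow; apply Rmult_comm.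
Qed.

Lemma analytic_on_closed_locally_ex_derive (lam : R) (h : R -> R) :
  analytic_on_closed lam h -> forall x0, 0 <= x0 <= lam -> locally x0 (ex_derive h).
Proof.
  intros Han x0 Hx0.
  destruct (Han x0 Hx0) as (a & r & Hr & Hs).
  assert (Heq : forall x, x0 - r < x < x0 + r -> PSeries a (x - x0) = h x).
  { intros x Hx; apply is_pseries_unique, Hs, Rabs_def1; lra. }
  apply (locally_interval _ x0 (x0 - r) (x0 + r)); simpl; try lra.
  intros x Hl Hu.
  apply (ex_derive_ext_loc (fun t => PSeries a (t - x0))).
  - apply (locally_interval _ x (x0 - r) (x0 + r)); simpl; try lra.
    intros t Htl Htu; apply Heq; lra.
  - apply (ex_derive_comp (PSeries a) (fun t => t - x0)); [|auto_derive; auto].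
    apply ex_derive_PSeries, (CV_radius_gt_of_ex_pseries a r).
    + intros z Hz; exists (h (z + x0)).
      assert (Hz' := Hs (z + x0)); replace (z + x0 - x0) with z in Hz' by ring.
      now apply Hz'.
    + apply Rabs_def1; lra.
Qed.

Lemma locally_pos_of_continuous (f : R -> R) (x : R) :
  continuous f x -> 0 < f x -> locally x (fun t => 0 < f t).
Proof.
  intros Hf Hpos; apply Hf.
  apply (locally_open (fun u => 0 < u)); [apply open_gt | auto | exact Hpos].
Qed.

Lemma locally_closed_interval (P : R -> Prop) (u v : R) : u <= v ->
  (forall x, u <= x <= v -> locally x P) ->
  exists a b, a < u /\ v < b /\ forall x, a < x < b -> P x.
Proof.
  intros Huv HP.
  destruct (HP u ltac:(lra)) as [du Hu]; destruct (HP v ltac:(lra)) as [dv Hv].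
  assert (du_pos := cond_pos du); assert (dv_pos := cond_pos dv).
  exists (u - du), (v + dv); split; [lra|split; [lra|]].
  intros x Hx.
  destruct (Rlt_le_dec x u) as [Hxu|Hux].
  { apply Hu; change (Rabs (x - u) < du); apply Rabs_def1; lra. }
  destruct (Rle_lt_dec x v) as [Hxv|Hvx].
  - apply locally_singleton, HP; lra.
  - apply Hv; change (Rabs (x - v) < dv); apply Rabs_def1; lra.
Qed.

Lemma is_derive_RInt_open (f : R -> R) (a b c : R) :
  (forall x, a < x < b -> continuous f x) -> a < c < b ->
  forall x, a < x < b -> is_derive (fun t => RInt f c t) x (f x).
Proof.
  intros Hf Hc x Hx.
  apply (is_derive_RInt f _ c); [|now apply Hf].
  apply (locally_interval _ x a b); simpl; try lra.
  intros t Hat Htb; apply (RInt_correct (V := R_CompleteNormedModule)).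
  apply ex_RInt_continuous; intros z Hz; apply Hf.
  unfold Rmin, Rmax in Hz; destruct Rle_dec; lra.
Qed.

Lemma is_derive_0_eq (f : R -> R) (u v : R) : u <= v ->
  (forall x, u < x < v -> is_derive f x 0) ->
  (forall x, u <= x <= v -> continuous f x) -> f u = f v.
Proof.
  intros Huv Hd Hc.
  destruct (MVT_gen f u v (fun _ => 0)) as (c & _ & Hfc);
    rewrite ?Rmin_left, ?Rmax_right; try lra; auto.
  intros x Hx; now apply continuity_pt_filterlim, Hc.
Qed.

Lemma is_derive_unique_right (f g : R -> R) (x d lf lg : R) : 0 < d ->
  is_derive f x lf -> is_derive g x lg ->
  (forall t, x <= t < x + d -> f t = g t) -> lf = lg.
Proof.
  intros Hd Hf Hg Hfg.
  assert (Hfg' := proj1 (is_derive_Reals _ _ _) (is_derive_minus _ _ _ _ _ Hf Hg)).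
  destruct (Req_dec lf lg) as [E|E]; [exact E|exfalso].
  assert (Hpos : 0 < Rabs (lf - lg)) by (apply Rabs_pos_lt; lra).
  destruct (Hfg' _ Hpos) as [del Hdel].
  (* on the right of [x] the difference quotient of [f - g] vanishes *)
  set (h := Rmin del d / 2).
  assert (Hmin : 0 < Rmin del d <= d) by
    (split; [apply Rmin_glb_lt; [apply cond_pos|lra] | apply Rmin_r]).
  assert (Hmin' : Rmin del d <= del) by apply Rmin_l.
  specialize (Hdel h ltac:(unfold h; lra) ltac:(rewrite Rabs_pos_eq; unfold h; lra)).
  rewrite (Hfg x), (Hfg (x + h)) in Hdel by (unfold h; lra).
  unfold minus, plus, opp in Hdel; simpl in Hdel.
  replace ((g (x + h) + - g (x + h) - (g x + - g x)) / h - (lf + - lg))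
    with (- (lf - lg)) in Hdel by (field; unfold h; lra).
  rewrite Rabs_Ropp in Hdel; lra.
Qed.

Definition G_h (beta : R) (h : R -> R) (x : R) : R :=
  RInt (fun xi => xi / Psi beta h xi) 0 x.

Lemma integrandE (beta : R) (h : R -> R) (x : R) :
  integrand beta h x = exp (-2 * G_h beta h x) / Psi beta h x.
Proof. reflexivity. Qed.

Lemma G_h_0 (beta : R) (h : R -> R) : G_h beta h 0 = 0.
Proof. exact (RInt_point 0 _). Qed.

Definition F_h (beta : R) (h : R -> R) (x : R) : R := RInt (integrand beta h) 0 x.

Lemma F_h_0 (beta : R) (h : R -> R) : F_h beta h 0 = 0.
Proof. exact (RInt_point 0 _). Qed.

Lemma tauE (lam gamma beta : R) (h : R -> R) (x : R) :
  tau lam gamma beta h x = D_h lam gamma beta h * (1 / gamma + F_h beta h x).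
Proof. reflexivity. Qed.

Lemma D_hE (lam gamma beta : R) (h : R -> R) :
  D_h lam gamma beta h = gamma / (1 + gamma * F_h beta h lam).
Proof. reflexivity. Qed.

Definition satisfies_ode (lam beta : R) (y : R -> R) : Prop :=
  forall eta, 0 < eta < lam ->
    ex_derive y eta /\
    ex_derive (fun x => (1 + beta * y x) * Derive y x) eta /\
    Derive (fun x => (1 + beta * y x) * Derive y x) eta + 2 * eta * Derive y eta = 0.

Lemma continuous_Psi (beta : R) (h : R -> R) (x : R) :
  continuous h x -> continuous (Psi beta h) x.
Proof.
  intros Hh; apply (continuous_plus (fun _ => 1) (fun t => beta * h t)).
  - apply continuous_const.
  - apply (continuous_scal_r beta h), Hh.
Qed.

Lemma in_K_locally_regular (lam beta : R) (y : R -> R) : 0 <= lam -> 0 <= beta ->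
  in_K lam y -> exists a b, a < 0 /\ lam < b /\
    forall x, a < x < b -> ex_derive y x /\ 0 < Psi beta y x.
Proof.
  intros Hlam Hbeta [[Han _] Hy01].
  apply locally_closed_interval; [exact Hlam|]; intros x Hx.
  assert (Hd := analytic_on_closed_locally_ex_derive lam y Han x Hx).
  apply (filter_and _ _ Hd), locally_pos_of_continuous.
  - apply continuous_Psi, (ex_derive_continuous y), (locally_singleton _ _ Hd).
  - specialize (Hy01 x Hx); unfold Psi; nra.
Qed.

Section Open_interval.

Variables (beta : R) (y : R -> R) (a b : R).
Hypothesis a_lt0 : a < 0.
Hypothesis b_gt0 : 0 < b.
Hypothesis regular : forall x, a < x < b -> ex_derive y x /\ 0 < Psi beta y x.

Let y_derivable x (Hx : a < x < b) : ex_derive y x := proj1 (regular x Hx).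
Let Psi_pos x (Hx : a < x < b) : 0 < Psi beta y x := proj2 (regular x Hx).

Lemma continuous_inv_Psi x : a < x < b -> continuous (fun t => / Psi beta y t) x.
Proof.
  intros Hx; apply continuous_Rinv_comp.
  - apply continuous_Psi, (ex_derive_continuous y), y_derivable, Hx.
  - apply Rgt_not_eq, Psi_pos, Hx.
Qed.

Lemma is_derive_G_h x : a < x < b -> is_derive (G_h beta y) x (x / Psi beta y x).
Proof.
  apply (is_derive_RInt_open (fun xi => xi / Psi beta y xi)); try lra.
  intros t Ht; apply (continuous_mult (fun xi => xi) (fun xi => / Psi beta y xi)).
  - apply continuous_id.
  - now apply continuous_inv_Psi.
Qed.

Lemma is_derive_exp_G_h k x : a < x < b ->
  is_derive (fun t => exp (k * G_h beta y t)) x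
    (k * x / Psi beta y x * exp (k * G_h beta y x)).
Proof.
  intros Hx; assert (HG := is_derive_G_h x Hx).
  auto_derive; [now exists (x / Psi beta y x)|].
  replace (Derive _ x) with (x / Psi beta y x) by (symmetry; now apply is_derive_unique).
  field; apply Rgt_not_eq, Psi_pos, Hx.
Qed.

Lemma continuous_integrand x : a < x < b -> continuous (integrand beta y) x.
Proof.
  intros Hx.
  apply (continuous_mult (fun t => exp (-2 * G_h beta y t)) (fun t => / Psi beta y t)).
  - apply (ex_derive_continuous (fun t => exp (-2 * G_h beta y t))).
    eexists; apply is_derive_exp_G_h, Hx.
  - now apply continuous_inv_Psi.
Qed.

Lemma is_derive_F_h x : a < x < b -> is_derive (F_h beta y) x (integrand beta y x).
Proof. apply is_derive_RInt_open; [exact continuous_integrand | lra]. Qed.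

Lemma F_h_ge0 x : 0 <= x < b -> 0 <= F_h beta y x.
Proof.
  intros Hx; apply RInt_ge_0; [lra| |].
  - apply (ex_RInt_continuous (V := R_CompleteNormedModule)); intros z Hz.
    apply continuous_integrand.
    unfold Rmin, Rmax in Hz; destruct Rle_dec; lra.
  - intros t Ht; apply Rlt_le, Rdiv_lt_0_compat; [apply exp_pos | apply Psi_pos; lra].
Qed.

Lemma is_derive_affine_F_h A B x : a < x < b ->
  is_derive (fun t => A + B * F_h beta y t) x (B * integrand beta y x).
Proof.
  intros Hx; assert (HF := is_derive_F_h x Hx).
  auto_derive; [now exists (integrand beta y x)|].
  replace (Derive _ x) with (integrand beta y x) by (symmetry; now apply is_derive_unique).
  ring.
Qed.

Variable lam : R.
Hypothesis lam_gt0 : 0 < lam.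
Hypothesis lam_lt_b : lam < b.

Lemma ode_Derive_integrand : satisfies_ode lam beta y ->
  exists c, forall x, 0 < x < lam -> Derive y x = c * integrand beta y x.
Proof.
  intros Hode.
  set (w := fun t => (1 + beta * y t) * Derive y t * exp (2 * G_h beta y t)).
  (* [exp (2 G_h)] is an integrating factor of the equation *)
  assert (Dw : forall x, 0 < x < lam -> is_derive w x 0).
  { intros x Hx; destruct (Hode x Hx) as (_ & Hflux & Heq).
    assert (Hexp := is_derive_exp_G_h 2 x ltac:(lra)).
    assert (Hw := is_derive_mult _ _ _ _ _ (Derive_correct _ _ Hflux) Hexp Rmult_comm).
    replace 0 with (Derive (fun t => (1 + beta * y t) * Derive y t) x * exp (2 * G_h beta y x)
      + (1 + beta * y x) * Derive y x * (2 * x / Psi beta y x * exp (2 * G_h beta y x)));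
      [exact Hw|].
    assert (HPsi := Psi_pos x ltac:(lra)); unfold Psi in *.
    replace (Derive _ x) with (- (2 * x * Derive y x)) by lra.
    field; lra. }
  exists (w (lam / 2)); intros x Hx.
  assert (Hwx : w x = w (lam / 2)).
  { assert (Hcw : forall t, 0 < t < lam -> continuous w t)
      by (intros t Ht; apply (ex_derive_continuous w); eexists; apply Dw, Ht).
    destruct (Rle_lt_dec x (lam / 2)); [|symmetry];
      apply is_derive_0_eq; try lra; intros t Ht; (apply Dw || apply Hcw); lra. }
  rewrite <- Hwx, integrandE; unfold w.
  replace (-2 * G_h beta y x) with (- (2 * G_h beta y x)) by ring; rewrite exp_Ropp.
  assert (HPsi := Psi_pos x ltac:(lra)); assert (Hexp := exp_pos (2 * G_h beta y x)).
  unfold Psi in *; field; lra.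
Qed.

Lemma ode_affine_F_h : satisfies_ode lam beta y ->
  exists c, forall x, 0 <= x <= lam -> y x = y 0 + c * F_h beta y x.
Proof.
  intros Hode; destruct (ode_Derive_integrand Hode) as [c Hc]; exists c; intros x Hx.
  set (f := fun t => y t - c * F_h beta y t).
  assert (Df : forall t, a < t < b -> is_derive f t (Derive y t - c * integrand beta y t)).
  { intros t Ht; assert (HF := is_derive_F_h t Ht).
    unfold f; auto_derive.
    { split; [apply y_derivable, Ht | split; [now exists (integrand beta y t) | easy]]. }
    replace (Derive (fun t => F_h beta y t) t) with (integrand beta y t)
      by (symmetry; now apply is_derive_unique).
    rewrite !Rmult_1_l; reflexivity. }
  assert (Hf : f 0 = f x).
  { apply is_derive_0_eq; try lra.
    - intros t Ht; replace 0 with (Derive y t - c * integrand beta y t)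
        by (rewrite (Hc t ltac:(lra)); ring).
      apply Df; lra.
    - intros t Ht; apply (ex_derive_continuous f); eexists; apply Df; lra. }
  unfold f in Hf; rewrite F_h_0 in Hf; lra.
Qed.

Lemma affine_F_h_ode A B : (forall x, 0 <= x <= lam -> y x = A + B * F_h beta y x) ->
  satisfies_ode lam beta y.
Proof.
  intros Haff eta Heta.
  assert (Dy : forall t, 0 < t < lam -> is_derive y t (B * integrand beta y t)).
  { intros t Ht; apply (is_derive_ext_loc (fun t => A + B * F_h beta y t)).
    - apply (locally_interval _ t 0 lam); simpl; try lra.
      intros s Hs1 Hs2; symmetry; apply Haff; lra.
    - apply is_derive_affine_F_h; lra. }
  assert (Hflux : locally eta
    (fun t => B * exp (-2 * G_h beta y t) = (1 + beta * y t) * Derive y t)).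
  { apply (locally_interval _ eta 0 lam); simpl; try lra.
    intros t Ht1 Ht2; rewrite (is_derive_unique _ _ _ (Dy t (conj Ht1 Ht2))), integrandE.
    assert (HPsi := Psi_pos t ltac:(lra)); unfold Psi in *; field; lra. }
  assert (Dflux := is_derive_ext_loc _ _ _ _ Hflux
    (is_derive_scal _ _ B _ (is_derive_exp_G_h (-2) eta ltac:(lra)))).
  split; [eexists; apply Dy, Heta|].
  split; [eexists; exact Dflux|].
  replace (Derive (fun x => (1 + beta * y x) * Derive y x) eta)
    with (B * (-2 * eta / Psi beta y eta * exp (-2 * G_h beta y eta)))
    by (symmetry; now apply is_derive_unique).
  rewrite (is_derive_unique _ _ _ (Dy eta Heta)), integrandE.
  field; apply Rgt_not_eq, Psi_pos; lra.
Qed.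

Lemma affine_F_h_Derive_0 A B : (forall x, 0 <= x <= lam -> y x = A + B * F_h beta y x) ->
  Derive y 0 = B / Psi beta y 0.
Proof.
  intros Haff.
  rewrite (is_derive_unique_right y (fun t => A + B * F_h beta y t) 0 lam
    (Derive y 0) (B * integrand beta y 0)); try easy.
  - rewrite integrandE, G_h_0, Rmult_0_r, exp_0; unfold Rdiv; ring.
  - apply Derive_correct, y_derivable; lra.
  - apply is_derive_affine_F_h; lra.
  - intros t Ht; apply Haff; lra.
Qed.

Lemma is_solution_affine_F_h gamma : is_solution lam gamma beta y <->
  exists A, (forall x, 0 <= x <= lam -> y x = A + gamma * A * F_h beta y x) /\
    A * (1 + gamma * F_h beta y lam) = 1.
Proof.
  assert (HPsi0 := Psi_pos 0 ltac:(lra)); unfold Psi in HPsi0.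
  split.
  - intros (Hode & (_ & Hbc) & Hy1).
    destruct (ode_affine_F_h Hode) as [c Hc].
    rewrite (affine_F_h_Derive_0 _ _ Hc) in Hbc; unfold Psi in Hbc.
    assert (Hc0 : c = gamma * y 0)
      by (replace c with (c / (1 + beta * y 0) + beta * y 0 * (c / (1 + beta * y 0)))
            by (field; lra); lra).
    rewrite Hc0 in Hc; exists (y 0); split; [exact Hc|].
    rewrite (Hc lam) in Hy1 by lra; lra.
  - intros (A & Haff & HA); split; [|split].
    + exact (affine_F_h_ode _ _ Haff).
    + split; [apply y_derivable; lra|].
      rewrite (affine_F_h_Derive_0 _ _ Haff); unfold Psi.
      rewrite (Haff 0), F_h_0 in * by lra; field; lra.
    + rewrite (Haff lam) by lra; lra.
Qed.

End Open_interval.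

Lemma is_fixed_point_affine_F_h (lam gamma beta : R) (y : R -> R) :
  0 < gamma -> 0 < 1 + gamma * F_h beta y lam ->
  is_fixed_point lam gamma beta y <->
  exists A, (forall x, 0 <= x <= lam -> y x = A + gamma * A * F_h beta y x) /\
    A * (1 + gamma * F_h beta y lam) = 1.
Proof.
  intros Hgamma Hden; unfold is_fixed_point; setoid_rewrite tauE; rewrite D_hE.
  split.
  - intros Hfix; exists (1 / (1 + gamma * F_h beta y lam)); split.
    + intros x Hx; rewrite (Hfix x Hx); field; lra.
    + field; lra.
  - intros (A & Haff & HA) x Hx; rewrite (Haff x Hx).
    replace A with (1 / (1 + gamma * F_h beta y lam))
      by (apply (Rmult_eq_reg_r (1 + gamma * F_h beta y lam)); [field_simplify; lra | lra]).
    field; lra.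
Qed.

Theorem theorem3p2 (lam gamma beta : R) (y : R -> R)
  (Hlam : 0 < lam) (Hgamma : 0 < gamma) (Hbeta : 0 <= beta)
  (Hy : in_K lam y) :
  is_solution lam gamma beta y <-> is_fixed_point lam gamma beta y.
Proof.
  destruct (in_K_locally_regular lam beta y ltac:(lra) Hbeta Hy) as (a & b & Ha & Hb & Hreg).
  assert (HF := F_h_ge0 beta y a b Ha ltac:(lra) Hreg lam ltac:(lra)).
  rewrite (is_solution_affine_F_h beta y a b Ha ltac:(lra) Hreg lam Hlam ltac:(lra)).
  rewrite is_fixed_point_affine_F_h by nra.
  reflexivity.
Qed.
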